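(* Let $\Lambda$ be the groupoid of Markov shifts and $E$ the set of elementary conjugacies. Then the map $\mathcal N(\Lambda,E)\to\mathrm{SSE}(\{0,1\})$ sending $X_A\mapsto A$ and $\varphi\mapsto(R_\varphi,S_\varphi)$ (so that a simplex given by elementary conjugacies $\varphi_{i,j}:X_{B_i}\to X_{B_j}$ is sent to the simplex given by the pairs $(R_{\varphi_{i,j}},S_{\varphi_{i,j}})$) is an isomorphism of simplicial sets.
   Context: Non-degenerate: no zero rows or columns. For a non-degenerate $A\in\{0,1\}^{n\times n}$, $X_A=\{x\in\{1,\dots,n\}^{\mathbb Z}:A_{x_\ell,x_{\ell+1}}=1\ \forall\ell\}$ with the left shift. $\Lambda$ has as objects the shifts $X_A$ for non-degenerate square $\{0,1\}$-matrices $A$, and as morphisms shift-commuting homeomorphisms. A conjugacy $\varphi:X_A\to X_B$ is elementary if there are $\varphi_{\mathrm{loc}}$, $\varphi^{-1}_{\mathrm{loc}}$ (on allowed pairs) with $\varphi(x)_i=\varphi_{\mathrm{loc}}(x_i,x_{i+1})$ and $\varphi^{-1}(y)_i=\varphi^{-1}_{\mathrm{loc}}(y_{i-1},y_i)$. $(R_\varphi)_{a,b}=1$ iff $\varphi_{\mathrm{loc}}(a,a')=b$ for some allowed $a'$; $(S_\varphi)_{b,a}=1$ iff $\varphi^{-1}_{\mathrm{loc}}(b,b')=a$ for some allowed $b'$. The nerve $\mathcal N(\Lambda,E)$ is the simplicial set whose $n$-simplices are tuples of objects $(X_0,\dots,X_n)$ with morphisms $\varphi_{i,j}:X_i\to X_j$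 in $E$ ($i<j$) such that $\varphi_{j,k}\circ\varphi_{i,j}=\varphi_{i,k}$ for $i<j<k$. $\mathrm{SSE}(\{0,1\})$ has as $n$-simplices tuples $(B_0,\dots,B_n)$ of non-degenerate square $\{0,1\}$-matrices with non-degenerate $\{0,1\}$-matrices $R^{i,j},S^{i,j}$ ($i<j$), $B_i=R^{i,j}S^{i,j}$, $B_j=S^{i,j}R^{i,j}$, and for $i<j<k$: $R^{i,j}R^{j,k}=R^{i,k}$, $R^{j,k}S^{i,k}=S^{i,j}$, $S^{i,k}R^{i,j}=S^{j,k}$. Face maps in both delete a vertex. *)

From mathcomp Require Import all_boot all_algebra.
From Stdlib Require Import ClassicalEpsilon.

Set Implicit Arguments.
Unset Strict Implicit.
Unset Printing Implicit Defensive.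

(* Matrices: {0,1}-matrices are represented as nat-matrices whose      *)
(* entries are <= 1; products are the usual (integer) matrix products. *)
(* The alphabet {1,...,n} is represented by 'I_n = {0,...,n-1}.        *)

Definition zo (m n : nat) (M : 'M[nat]_(m, n)) : Prop :=
  forall i j, M i j <= 1.

Definition nondeg (m n : nat) (M : 'M[nat]_(m, n)) : Prop :=
  (forall i, exists j, M i j != 0) /\ (forall j, exists i, M i j != 0).

Definition goodmx (n : nat) (A : 'M[nat]_n) : Prop := zo A /\ nondeg A.

Definition seqs (n : nat) := int -> 'I_n.

Definition inX (n : nat) (A : 'M[nat]_n) (x : seqs n) : Prop :=
  forall l : int, A (x l) (x (l + 1)%R) = 1.

Definition pt (n : nat) (A : 'M[nat]_n) := {x : seqs n | inX A x}.

Definition shseq (n : nat) (x : seqs n) : seqs n := fun l => x (l + 1)%R.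

Definition shpt (n : nat) (A : 'M[nat]_n) (p : pt A) : pt A :=
  exist (inX A) (shseq (proj1_sig p)) (fun l => proj2_sig p (l + 1)%R).

Definition Xset (n : nat) (A : 'M[nat]_n) (y : int -> nat) : Prop :=
  exists x : seqs n, inX A x /\ y = (fun l => nat_of_ord (x l)).

(* Topology: product topology of discrete spaces, restricted to X_A.   *)

Definition agree (n : nat) (x y : seqs n) (N : nat) : Prop :=
  forall l : int, (absz l <= N)%N -> x l = y l.

Definition cont (n m : nat) (A : 'M[nat]_n) (B : 'M[nat]_m) (f : pt A -> pt B) : Prop :=
  forall (p : pt A) (N : nat), exists M : nat, forall q : pt A,
    agree (proj1_sig p) (proj1_sig q) M ->
    agree (proj1_sig (f p)) (proj1_sig (f q)) N.

Definition conjugacy (n m : nat) (A : 'M[nat]_n) (B : 'M[nat]_m) (phi : pt A -> pt B) : Prop :=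
  exists psi : pt B -> pt A,
    cancel phi psi /\ cancel psi phi /\ cont phi /\ cont psi /\
    (forall p, phi (shpt p) = shpt (phi p)).

Definition locrule (n m : nat) (A : 'M[nat]_n) (B : 'M[nat]_m) (phi : pt A -> pt B)
  (floc : 'I_n -> 'I_n -> 'I_m) : Prop :=
  forall (p : pt A) (i : int),
    proj1_sig (phi p) i = floc (proj1_sig p i) (proj1_sig p (i + 1)%R).

Definition invlocrule (n m : nat) (A : 'M[nat]_n) (B : 'M[nat]_m) (phi : pt A -> pt B)
  (gloc : 'I_m -> 'I_m -> 'I_n) : Prop :=
  forall (p : pt A) (i : int),
    proj1_sig p i = gloc (proj1_sig (phi p) (i - 1)%R) (proj1_sig (phi p) i).

Definition elementary (n m : nat) (A : 'M[nat]_n) (B : 'M[nat]_m) (phi : pt A -> pt B) : Prop :=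
  conjugacy phi /\ (exists floc, locrule phi floc) /\ (exists gloc, invlocrule phi gloc).

Definition Rprop (n m : nat) (A : 'M[nat]_n) (B : 'M[nat]_m) (phi : pt A -> pt B)
  (a : 'I_n) (b : 'I_m) : Prop :=
  exists floc, locrule phi floc /\ exists a' : 'I_n, A a a' = 1 /\ floc a a' = b.

Definition Sprop (n m : nat) (A : 'M[nat]_n) (B : 'M[nat]_m) (phi : pt A -> pt B)
  (b : 'I_m) (a : 'I_n) : Prop :=
  exists gloc, invlocrule phi gloc /\ exists b' : 'I_m, B b b' = 1 /\ gloc b b' = a.

Definition ind (P : Prop) : nat := if excluded_middle_informative P then 1 else 0.

Definition Rmat (n m : nat) (A : 'M[nat]_n) (B : 'M[nat]_m) (phi : pt A -> pt B)
  : 'M[nat]_(n, m) := \matrix_(a, b) ind (Rprop phi a b).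

Definition Smat (n m : nat) (A : 'M[nat]_n) (B : 'M[nat]_m) (phi : pt A -> pt B)
  : 'M[nat]_(m, n) := \matrix_(b, a) ind (Sprop phi b a).

(* An object X_A is recorded by its matrix A (cf. objinj in the        *)
(* theorem, which shows that X_A determines A).                        *)

Record nsimp (k : nat) := NSimp {
  nsz : 'I_k.+1 -> nat;
  nA : forall i, 'M[nat]_(nsz i);
  nphi : forall i j : 'I_k.+1, i < j -> pt (nA i) -> pt (nA j)
}.

Arguments nsz {k} n i.
Arguments nA {k} n i.
Arguments nphi {k} n {i j} h.

Definition nvalid (k : nat) (x : nsimp k) : Prop :=
  (forall i, goodmx (nA x i)) /\
  (forall i j : 'I_k.+1, forall h : i < j, elementary (nphi x h)) /\
  (forall i j l : 'I_k.+1, forall (hij : i < j) (hjl : j < l) (hil : i < l) (p : pt (nA x i)),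
      nphi x hjl (nphi x hij p) = nphi x hil p).

Record ssimp (k : nat) := SSimp {
  ssz : 'I_k.+1 -> nat;
  sB : forall i, 'M[nat]_(ssz i);
  sR : forall i j : 'I_k.+1, i < j -> 'M[nat]_(ssz i, ssz j);
  sS : forall i j : 'I_k.+1, i < j -> 'M[nat]_(ssz j, ssz i)
}.

Arguments ssz {k} s i.
Arguments sB {k} s i.
Arguments sR {k} s {i j} h.
Arguments sS {k} s {i j} h.

Definition svalid (k : nat) (s : ssimp k) : Prop :=
  (forall i, goodmx (sB s i)) /\
  (forall i j : 'I_k.+1, forall h : i < j,
      zo (sR s h) /\ nondeg (sR s h) /\ zo (sS s h) /\ nondeg (sS s h) /\
      sB s i = (sR s h *m sS s h)%R /\ sB s j = (sS s h *m sR s h)%R) /\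
  (forall i j l : 'I_k.+1, forall (hij : i < j) (hjl : j < l) (hil : i < l),
      (sR s hij *m sR s hjl)%R = sR s hil /\
      (sR s hjl *m sS s hil)%R = sS s hij /\
      (sS s hil *m sR s hij)%R = sS s hjl).

Definition Fmap (k : nat) (x : nsimp k) : ssimp k :=
  @SSimp k (nsz x) (nA x)
    (fun i j h => Rmat (nphi x h))
    (fun i j h => Smat (nphi x h)).

(* Simplicial structure: reindexing along a nondecreasing map          *)
(* f : [m] -> [k].  Faces (f = lift i, deleting vertex i) and          *)
(* degeneracies (repeating a vertex, with the identity conjugacy,      *)
(* resp. the pair (I, B)) are the special cases.                       *)

Lemma le_nlt_eq (k : nat) (a b : 'I_k) : a <= b -> (a < b) = false -> a = b.
Proof.
move=> le nlt; apply: val_inj; apply/eqP; rewrite eqn_leq le /=.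
by rewrite leqNgt nlt.
Qed.

Definition nmor (k : nat) (x : nsimp k) (a b : 'I_k.+1) (le : a <= b)
  : pt (nA x a) -> pt (nA x b) :=
  (if a < b as c return (a < b) = c -> pt (nA x a) -> pt (nA x b)
   then fun h => nphi x h
   else fun h p => eq_rect a (fun t => pt (nA x t)) p b (le_nlt_eq le h)) erefl.

Definition smorR (k : nat) (s : ssimp k) (a b : 'I_k.+1) (le : a <= b)
  : 'M[nat]_(ssz s a, ssz s b) :=
  (if a < b as c return (a < b) = c -> 'M[nat]_(ssz s a, ssz s b)
   then fun h => sR s h
   else fun h => eq_rect a (fun t => 'M[nat]_(ssz s a, ssz s t)) (1%:M)%R b (le_nlt_eq le h))
  erefl.

Definition smorS (k : nat) (s : ssimp k) (a b : 'I_k.+1) (le : a <= b)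
  : 'M[nat]_(ssz s b, ssz s a) :=
  (if a < b as c return (a < b) = c -> 'M[nat]_(ssz s b, ssz s a)
   then fun h => sS s h
   else fun h => eq_rect a (fun t => 'M[nat]_(ssz s t, ssz s a)) (sB s a) b (le_nlt_eq le h))
  erefl.

Arguments nmor {k} x {a b} le.
Arguments smorR {k} s {a b} le.
Arguments smorS {k} s {a b} le.

Definition monotone (m k : nat) (f : 'I_m -> 'I_k) : Prop :=
  forall a b : 'I_m, a <= b -> f a <= f b.

Definition nreidx (m k : nat) (f : 'I_m.+1 -> 'I_k.+1) (hf : monotone f) (x : nsimp k)
  : nsimp m :=
  @NSimp m (fun a => nsz x (f a)) (fun a => nA x (f a))
    (fun a b h => nmor x (hf a b (ltnW h))).

Definition sreidx (m k : nat) (f : 'I_m.+1 -> 'I_k.+1) (hf : monotone f) (s : ssimp k)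
  : ssimp m :=
  @SSimp m (fun a => ssz s (f a)) (fun a => sB s (f a))
    (fun a b h => smorR s (hf a b (ltnW h)))
    (fun a b h => smorS s (hf a b (ltnW h))).

(* A point x of X_A and its image under an elementary conjugacy phi interleave into
   the path  ... x_0 -R-> phi(x)_0 -S-> x_1 -R-> phi(x)_1 ...,  and R_phi, S_phi record
   exactly the pairs that occur: R_phi a b iff some x has x_0 = a and phi(x)_0 = b, and
   S_phi b a iff some x has phi(x)_0 = b and x_1 = a.  Every identity between these
   matrices is proved by splicing two points along a common coordinate and pulling the
   spliced point back along a conjugacy; since phi and its inverse are 2-block codes,
   the coordinates that matter are carried over.  This gives the three composition laws
   of a 2-simplex; A = R S and B = S R are the laws for the triangles (id, phi, phi) and
   (phi, id, phi), because R_id = 1 and S_id = A.  Conversely, if A = R S and B = S R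
   with 0-1 factors, each edge a a' of A has a unique b with R a b = S b a' = 1 (as
   (R S) a a' <= 1), and replacing each x_i by the b of the edge x_i x_(i+1) is an
   elementary conjugacy with matrices (R, S). *)

From mathcomp Require Import all_boot all_algebra zify.
From Stdlib Require Import ClassicalEpsilon FunctionalExtensionality ProofIrrelevance.
From Stdlib Require Import Eqdep Classical.
Import GRing.Theory Num.Theory.

Set Implicit Arguments.
Unset Strict Implicit.
Unset Printing Implicit Defensive.

Local Notation coord p l := (proj1_sig p l%R).

Lemma pt_ext n (A : 'M[nat]_n) (p q : pt A) : (forall l, coord p l = coord q l) -> p = q.
Proof.
case: p q => [x hx] [y hy] /= exy.
have exy' : x = y by apply: functional_extensionality.
by subst; congr exist; apply: proof_irrelevance.
Qed.

Lemma edge_pt n (A : 'M[nat]_n) (p : pt A) (l l' : int) :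
  l' = (l + 1)%R -> A (coord p l) (coord p l') = 1.
Proof. by move=> ->; apply: (proj2_sig p). Qed.

Lemma ind1P (P : Prop) : ind P = 1 <-> P.
Proof. by rewrite /ind; case: excluded_middle_informative. Qed.

Lemma ind_le1 (P : Prop) : ind P <= 1.
Proof. by rewrite /ind; case: excluded_middle_informative. Qed.

Lemma zo_eq1 n m (M : 'M[nat]_(n, m)) i j : zo M -> M i j != 0 -> M i j = 1.
Proof. by move/(_ i j); case: (M i j) => [|[|]]. Qed.

Lemma zo_eq0 n m (M : 'M[nat]_(n, m)) i j : zo M -> M i j != 1 -> M i j = 0.
Proof. by move/(_ i j); case: (M i j) => [|[|]]. Qed.

Lemma ind_eq01 (P : Prop) (x : nat) : x <= 1 -> (x = 1 <-> P) -> ind P = x.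
Proof.
rewrite /ind => x_le1 xP; case: excluded_middle_informative => [/xP // | nP].
by case: x x_le1 xP => [|[|]] // _ [/(_ erefl)].
Qed.

Lemma ind_mul_eq0 (P Q : Prop) : ~ (P /\ Q) -> (ind P * ind Q)%R = 0.
Proof.
move=> nPQ; rewrite /ind.
case: (excluded_middle_informative P) => [HP | nP] /=; last by rewrite mul0r.
by case: (excluded_middle_informative Q) => [HQ | nQ] /=; [case: nPQ | rewrite mulr0].
Qed.

Lemma mulmx_ind n m p (P : 'I_n -> 'I_m -> Prop) (Q : 'I_m -> 'I_p -> Prop)
    (M : 'M[nat]_(n, p)) :
  zo M -> (forall a c, M a c = 1 <-> exists b, P a b /\ Q b c) ->
  (forall a b b' c, P a b -> Q b c -> P a b' -> Q b' c -> b = b') ->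
  M = (\matrix_(a, b) ind (P a b) *m \matrix_(b, c) ind (Q b c))%R.
Proof.
move=> zM hM uniq; apply/matrixP => a c; rewrite !mxE.
have [Mac1 | Mac1] := eqVneq (M a c) 1.
- have [b [Pab Qbc]] := proj1 (hM a c) Mac1.
  rewrite Mac1 (bigD1 b) //= big1 ?addr0 => [|b' b'b].
    by rewrite !mxE (proj2 (ind1P _) Pab) (proj2 (ind1P _) Qbc).
  rewrite !mxE ind_mul_eq0 // => -[Pab' Qb'c].
  by rewrite (uniq _ _ _ _ Pab' Qb'c Pab Qbc) eqxx in b'b.
- rewrite (zo_eq0 zM Mac1) big1 // => b _; rewrite !mxE ind_mul_eq0 // => PQ.
  by move/eqP: Mac1; apply; apply/hM; exists b.
Qed.

Lemma mulmx_gt0 n m p (M : 'M[nat]_(n, m)) (N : 'M[nat]_(m, p)) i k j :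
  M i k = 1 -> N k j = 1 -> 0 < (M *m N)%R i j.
Proof. by move=> Mik Nkj; rewrite mxE (bigD1 k) //= Mik Nkj. Qed.

Lemma mulmx_witness n m p (M : 'M[nat]_(n, m)) (N : 'M[nat]_(m, p)) i j :
  zo M -> zo N -> (M *m N)%R i j != 0 -> exists k, M i k = 1 /\ N k j = 1.
Proof.
move=> zM zN /eqP MN0; apply: NNPP => nex; apply: MN0.
rewrite mxE big1 // => k _.
have [Mik | /(zo_eq0 zM) ->] := eqVneq (M i k) 1; last by rewrite mul0r.
have [Nkj | /(zo_eq0 zN) ->] := eqVneq (N k j) 1; last by rewrite mulr0.
by case: nex; exists k.
Qed.

Lemma mulmx_witness_uniq n m p (M : 'M[nat]_(n, m)) (N : 'M[nat]_(m, p)) i k k' j :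
  (M *m N)%R i j <= 1 -> M i k = 1 -> N k j = 1 -> M i k' = 1 -> N k' j = 1 -> k = k'.
Proof.
move=> le1 Mik Nkj Mik' Nk'j; apply/eqP; apply: contraTT le1 => neq.
rewrite mxE (bigD1 k) //= (bigD1 k') 1?eq_sym //= Mik Nkj Mik' Nk'j.
by rewrite -ltnNge.
Qed.

Section Points.
Variables (n : nat) (A : 'M[nat]_n).
Hypothesis hA : goodmx A.

Lemma exists_succ i : exists j, A i j == 1.
Proof. by case: hA => zA [/(_ i) [j /(zo_eq1 zA) /eqP]]; exists j. Qed.

Lemma exists_pred j : exists i, A i j == 1.
Proof. by case: hA => zA [_ /(_ j) [i /(zo_eq1 zA) /eqP]]; exists i. Qed.

Definition succ_sym i := xchoose (exists_succ i).
Definition pred_sym j := xchoose (exists_pred j).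

Lemma succ_symP i : A i (succ_sym i) = 1.
Proof. exact/eqP/(xchooseP (exists_succ i)). Qed.

Lemma pred_symP j : A (pred_sym j) j = 1.
Proof. exact/eqP/(xchooseP (exists_pred j)). Qed.

Definition edge_seq (a a' : 'I_n) : seqs n := fun l =>
  match l with
  | Posz 0 => a
  | Posz k.+1 => iter k succ_sym a'
  | Negz k => iter k.+1 pred_sym a
  end.

Lemma edge_seq_in a a' : A a a' = 1 -> inX A (edge_seq a a').
Proof.
move=> haa' [[|k]|[|k]].
- by [].
- have -> : (Posz k.+1 + 1)%R = Posz k.+2 by lia.
  by rewrite /edge_seq /= succ_symP.
- by rewrite /edge_seq /= pred_symP.
- have -> : (Negz k.+1 + 1)%R = Negz k by lia.
  by rewrite /edge_seq /= pred_symP.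
Qed.

Lemma exists_pt_edge (l l' : int) a a' : l' = (l + 1)%R -> A a a' = 1 ->
  exists p : pt A, coord p l = a /\ coord p l' = a'.
Proof.
move=> -> haa'; have hx := edge_seq_in haa'.
have hy : inX A (fun k => edge_seq a a' (k - l)%R).
  by move=> k; have := hx (k - l)%R; rewrite addrAC.
exists (exist _ _ hy) => /=; rewrite subrr addrAC subrr.
by split.
Qed.

Lemma exists_pt_at (l : int) a : exists p : pt A, coord p l = a.
Proof.
have [p [pa _]] := exists_pt_edge (erefl (l + 1)%R) (succ_symP a).
by exists p.
Qed.

Lemma exists_splice (d : int) (p q : pt A) : coord p d = coord q d ->
  exists r : pt A, (forall l, (l <= d)%R -> coord r l = coord p l) /\
                   (forall l, (d <= l)%R -> coord r l = coord q l).
Proof.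
move=> epq; pose x l := if (l <= d)%R then coord p l else coord q l.
have hx : inX A x.
  move=> l; rewrite /x; case: (ltrgtP l d) => [ltld|ltdl|->].
  - by rewrite ifT; [apply: edge_pt | lia].
  - by rewrite ifF; [apply: edge_pt | lia].
  - by rewrite ifF ?epq; [apply: edge_pt | lia].
exists (exist _ x hx); split=> l hl /=; rewrite /x.
- by rewrite hl.
- by case: (ltrgtP l d) => // [|->]; [lia|].
Qed.

End Points.

Lemma Rmat_zo n m (A : 'M[nat]_n) (B : 'M[nat]_m) (phi : pt A -> pt B) : zo (Rmat phi).
Proof. by move=> a b; rewrite mxE ind_le1. Qed.

Lemma Smat_zo n m (A : 'M[nat]_n) (B : 'M[nat]_m) (phi : pt A -> pt B) : zo (Smat phi).
Proof. by move=> b a; rewrite mxE ind_le1. Qed.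

Section Elementary.
Variables (n m : nat) (A : 'M[nat]_n) (B : 'M[nat]_m).
Hypotheses (hA : goodmx A) (hB : goodmx B).
Variable phi : pt A -> pt B.
Hypothesis ephi : elementary phi.

Lemma elementary_surj q : exists p, phi p = q.
Proof. by case: ephi => [[psi [_ [psiK _]]] _]; exists (psi q). Qed.

Lemma elementary_local p p' (l l' : int) : l' = (l + 1)%R ->
  coord p l = coord p' l -> coord p l' = coord p' l' ->
  coord (phi p) l = coord (phi p') l.
Proof. by case: ephi => _ [[f hf] _] -> e e'; rewrite !hf e e'. Qed.

Lemma elementary_inv_local p p' (l l' : int) : l' = (l + 1)%R ->
  coord (phi p) l = coord (phi p') l -> coord (phi p) l' = coord (phi p') l' ->
  coord p l' = coord p' l'.
Proof. by case: ephi => _ [_ [g hg]] -> e e'; rewrite !hg addrK e e'. Qed.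

Lemma Rprop_pt (l : int) a b : Rprop phi a b <-> exists p, coord p l = a /\ coord (phi p) l = b.
Proof.
split.
- case=> f [hf [a' [haa' <-]]].
  have [p [pa pa']] := exists_pt_edge hA (erefl (l + 1)%R) haa'.
  by exists p; rewrite hf pa pa'.
- case: ephi => _ [[f hf] _] [p [<- <-]].
  exists f; split=> //; exists (coord p (l + 1)%R).
  by rewrite hf; split=> //; apply: edge_pt.
Qed.

Lemma Sprop_pt (l l' : int) b a : l' = (l + 1)%R ->
  Sprop phi b a <-> exists p, coord (phi p) l = b /\ coord p l' = a.
Proof.
move=> ->; split.
- case=> g [hg [b' [hbb' <-]]].
  have [q [qb qb']] := exists_pt_edge hB (erefl (l + 1)%R) hbb'.
  have [p pq] := elementary_surj q.
  by exists p; rewrite hg addrK pq qb qb'.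
- case: ephi => _ [_ [g hg]] [p [<- <-]].
  exists g; split=> //; exists (coord (phi p) (l + 1)%R).
  by rewrite hg addrK; split=> //; apply: edge_pt.
Qed.

Lemma Sprop_pt01 b a : Sprop phi b a <-> exists p, coord (phi p) 0 = b /\ coord p 1 = a.
Proof. exact: Sprop_pt. Qed.

Lemma Rprop_coord p (l : int) : Rprop phi (coord p l) (coord (phi p) l).
Proof. by apply/(Rprop_pt l); exists p. Qed.

Lemma Sprop_coord p (l : int) : Sprop phi (coord (phi p) l) (coord p (l + 1)%R).
Proof. by apply/(Sprop_pt _ _ erefl); exists p. Qed.

Lemma Rmat_coord p (l : int) : Rmat phi (coord p l) (coord (phi p) l) = 1.
Proof. by rewrite mxE; apply/ind1P/Rprop_coord. Qed.

Lemma Smat_coord p (l : int) : Smat phi (coord (phi p) l) (coord p (l + 1)) = 1.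
Proof. by rewrite mxE; apply/ind1P/Sprop_coord. Qed.

Lemma Rmat_nondeg : nondeg (Rmat phi).
Proof.
split=> [a | b].
- have [p <-] := exists_pt_at hA 0 a.
  by exists (coord (phi p) 0); rewrite Rmat_coord.
- have [q <-] := exists_pt_at hB 0 b; have [p <-] := elementary_surj q.
  by exists (coord p 0); rewrite Rmat_coord.
Qed.

Lemma Smat_nondeg : nondeg (Smat phi).
Proof.
split=> [b | a].
- have [q <-] := exists_pt_at hB 0 b; have [p <-] := elementary_surj q.
  by exists (coord p 1); rewrite Smat_coord.
- have [p <-] := exists_pt_at hA 1 a.
  by exists (coord (phi p) 0); rewrite Smat_coord.
Qed.

End Elementary.

Section Composition.
Variables (n1 n2 n3 : nat) (A : 'M[nat]_n1) (B : 'M[nat]_n2) (C : 'M[nat]_n3).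
Hypotheses (hA : goodmx A) (hB : goodmx B) (hC : goodmx C).
Variables (phi1 : pt A -> pt B) (phi2 : pt B -> pt C) (phi3 : pt A -> pt C).
Hypotheses (e1 : elementary phi1) (e2 : elementary phi2) (e3 : elementary phi3).
Hypothesis phi_comp : forall p, phi2 (phi1 p) = phi3 p.

Lemma Rmat_comp_witness a b c : Rprop phi1 a b -> Rprop phi2 b c ->
  exists p, coord p 0 = a /\ coord (phi1 p) 0 = b /\ coord (phi3 p) 0 = c.
Proof.
move=> /(Rprop_pt hA e1 0) [p1 [p1a p1b]] /(Rprop_pt hB e2 0) [q [qb qc]].
have [y [yl yr]] := exists_splice (etrans p1b (esym qb)).
have [p py] := elementary_surj e1 y.
exists p; split; [|split].
- by rewrite -p1a; apply: (elementary_inv_local e1 (l := -1)); rewrite // py yl.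
- by rewrite py yl.
- by rewrite -qc -phi_comp; apply: (elementary_local e2 (l' := 1)); rewrite // py yr.
Qed.

Lemma Rmat_comp_unique p p' : coord p 0 = coord p' 0 ->
  coord (phi3 p) 0 = coord (phi3 p') 0 -> coord (phi1 p) 0 = coord (phi1 p') 0.
Proof.
move=> ep e3p.
have [w [wl wr]] := exists_splice e3p.
have [u uw] := elementary_surj e3 w.
have u0 : coord u 0 = coord p 0.
  by apply: (elementary_inv_local e3 (l := -1)); rewrite // uw wl.
have u1 : coord u 1 = coord p' 1.
  by apply: (elementary_inv_local e3 (l := 0)); rewrite // uw wr.
transitivity (coord (phi1 u) 0).
- by apply: (elementary_inv_local e2 (l := -1)); rewrite // !phi_comp uw wl.
- by apply: (elementary_local e1 (l' := 1)); rewrite // u0.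
Qed.

Lemma Rmat_comp : Rmat phi3 = (Rmat phi1 *m Rmat phi2)%R.
Proof.
apply: mulmx_ind (Rmat_zo _) _ _ => [a c | a b b' c r1 r2 r1' r2'].
- rewrite mxE ind1P; split.
  + case/(Rprop_pt hA e3 0) => p [<- <-]; exists (coord (phi1 p) 0).
    by rewrite -phi_comp; split; apply: Rprop_coord.
  + case=> b [r1 r2]; have [p [<- [_ <-]]] := Rmat_comp_witness r1 r2.
    exact: Rprop_coord.
- have [p [pa [<- pc]]] := Rmat_comp_witness r1 r2.
  have [p' [p'a [<- p'c]]] := Rmat_comp_witness r1' r2'.
  by apply: Rmat_comp_unique; rewrite ?pa ?p'a ?pc ?p'c.
Qed.

Lemma Smat_comp_fst_witness b c a : Rprop phi2 b c -> Sprop phi3 c a ->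
  exists p, coord (phi1 p) 0 = b /\ coord (phi3 p) 0 = c /\ coord p 1 = a.
Proof.
move=> /(Rprop_pt hB e2 0) [q [qb qc]] /(Sprop_pt01 hC e3) [p3 [p3c p3a]].
have [w [wl wr]] := exists_splice (etrans qc (esym p3c)).
have [u uw] := elementary_surj e3 w.
exists u; split; [|split].
- by rewrite -qb; apply: (elementary_inv_local e2 (l := -1)); rewrite // phi_comp uw wl.
- by rewrite uw wl.
- by rewrite -p3a; apply: (elementary_inv_local e3 (l := 0)); rewrite // uw wr.
Qed.

Lemma Smat_comp_fst_unique p p' : coord (phi1 p) 0 = coord (phi1 p') 0 ->
  coord p 1 = coord p' 1 -> coord (phi3 p) 0 = coord (phi3 p') 0.
Proof.
move=> e1p ep.
have [y [yl yr]] := exists_splice e1p.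
have [u uy] := elementary_surj e1 y.
have u0 : coord u 0 = coord p 0.
  by apply: (elementary_inv_local e1 (l := -1)); rewrite // uy yl.
have u1 : coord u 1 = coord p' 1.
  by apply: (elementary_inv_local e1 (l := 0)); rewrite // uy yr.
transitivity (coord (phi3 u) 0).
- by apply: (elementary_local e3 (l' := 1)); rewrite ?u0 ?u1.
- by rewrite -!phi_comp; apply: (elementary_local e2 (l' := 1)); rewrite // uy yr.
Qed.

Lemma Smat_comp_fst : Smat phi1 = (Rmat phi2 *m Smat phi3)%R.
Proof.
apply: mulmx_ind (Smat_zo _) _ _ => [b a | b c c' a r2 s3 r2' s3'].
- rewrite mxE ind1P; split.
  + case/(Sprop_pt01 hB e1) => p [<- <-]; exists (coord (phi3 p) 0); split.
    * by rewrite -phi_comp; apply: Rprop_coord.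
    * exact: Sprop_coord.
  + case=> c [r2 s3]; have [p [<- [_ <-]]] := Smat_comp_fst_witness r2 s3.
    exact: Sprop_coord.
- have [p [pb [<- pa]]] := Smat_comp_fst_witness r2 s3.
  have [p' [p'b [<- p'a]]] := Smat_comp_fst_witness r2' s3'.
  by apply: Smat_comp_fst_unique; rewrite ?pb ?p'b ?pa ?p'a.
Qed.

Lemma Smat_comp_snd_witness c a b : Sprop phi3 c a -> Rprop phi1 a b ->
  exists p, coord (phi3 p) 0 = c /\ coord p 1 = a /\ coord (phi1 p) 1 = b.
Proof.
move=> /(Sprop_pt01 hC e3) [p3 [p3c p3a]] /(Rprop_pt hA e1 1) [p1 [p1a p1b]].
have [x [xl xr]] := exists_splice (etrans p3a (esym p1a)).
exists x; split; [|split].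
- by rewrite -p3c; apply: (elementary_local e3 (l' := 1)); rewrite // xl.
- by rewrite xl.
- by rewrite -p1b; apply: (elementary_local e1 (l' := 2)); rewrite // xr.
Qed.

Lemma Smat_comp_snd_unique p p' : coord (phi3 p) 0 = coord (phi3 p') 0 ->
  coord (phi1 p) 1 = coord (phi1 p') 1 -> coord p 1 = coord p' 1.
Proof.
move=> e3p e1p.
have [y [yl yr]] := exists_splice e1p.
have [u uy] := elementary_surj e1 y.
transitivity (coord u 1).
- by apply: (elementary_inv_local e1 (l := 0)); rewrite // uy yl.
- apply: (elementary_inv_local e3 (l := 0)) => //.
  + rewrite -e3p -!phi_comp uy.
    by apply: (elementary_local e2 (l' := 1)); rewrite // yl.
  + rewrite -!phi_comp uy.
    by apply: (elementary_local e2 (l' := 2)); rewrite // yr.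
Qed.

Lemma Smat_comp_snd : Smat phi2 = (Smat phi3 *m Rmat phi1)%R.
Proof.
apply: mulmx_ind (Smat_zo _) _ _ => [c b | c a a' b s3 r1 s3' r1'].
- rewrite mxE ind1P; split.
  + case/(Sprop_pt01 hC e2) => q [qc qb]; have [p pq] := elementary_surj e1 q.
    exists (coord p 1); split.
    * by rewrite -qc -pq phi_comp; apply: Sprop_coord.
    * by rewrite -qb -pq; apply: Rprop_coord.
  + case=> a [s3 r1]; have [p [<- [_ <-]]] := Smat_comp_snd_witness s3 r1.
    by rewrite -phi_comp; apply: Sprop_coord.
- have [p [pc [<- pb]]] := Smat_comp_snd_witness s3 r1.
  have [p' [p'c [<- p'b]]] := Smat_comp_snd_witness s3' r1'.
  by apply: Smat_comp_snd_unique; rewrite ?pc ?p'c ?pb ?p'b.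
Qed.

End Composition.

Section Identity.
Variables (n : nat) (A : 'M[nat]_n).
Hypothesis hA : goodmx A.

Lemma elementary_id : elementary (@id (pt A)).
Proof.
split; [|split]; last by exists (fun _ a => a).
- have cont_id : cont (@id (pt A)) by move=> p N; exists N.
  by exists id.
- by exists (fun a _ => a).
Qed.

Lemma Rmat_id : Rmat (@id (pt A)) = 1%:M%R.
Proof.
apply/matrixP => a b; rewrite !mxE; apply: ind_eq01; first by case: (a == b).
rewrite (Rprop_pt hA elementary_id 0); split.
- by case: eqVneq => // <- _; have [p pa] := exists_pt_at hA 0 a; exists p.
- by case=> p [<- <-]; rewrite eqxx.
Qed.

Lemma Smat_id : Smat (@id (pt A)) = A.
Proof.
apply/matrixP => b a; rewrite !mxE; apply: ind_eq01; first by case: hA.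
rewrite (Sprop_pt01 hA elementary_id); split.
- by move/(exists_pt_edge hA (erefl (0 + 1)%R)).
- by case=> p [<- <-]; apply: edge_pt.
Qed.

End Identity.

Section ElementarySSE.
Variables (n m : nat) (A : 'M[nat]_n) (B : 'M[nat]_m).
Hypotheses (hA : goodmx A) (hB : goodmx B).
Variable phi : pt A -> pt B.
Hypothesis ephi : elementary phi.

Lemma elementary_RS : A = (Rmat phi *m Smat phi)%R.
Proof.
rewrite -{1}(Smat_id hA).
exact: (Smat_comp_fst hA hB (elementary_id A) ephi ephi).
Qed.

Lemma elementary_SR : B = (Smat phi *m Rmat phi)%R.
Proof.
rewrite -{1}(Smat_id hB).
exact: (Smat_comp_snd hA hB ephi (elementary_id B) ephi).
Qed.

End ElementarySSE.

Definition elem_sse n m (A : 'M[nat]_n) (B : 'M[nat]_m)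
    (R : 'M[nat]_(n, m)) (S : 'M[nat]_(m, n)) : Prop :=
  zo R /\ nondeg R /\ zo S /\ nondeg S /\ A = (R *m S)%R /\ B = (S *m R)%R.

Lemma elementary_elem_sse n m (A : 'M[nat]_n) (B : 'M[nat]_m) (phi : pt A -> pt B) :
  goodmx A -> goodmx B -> elementary phi -> elem_sse A B (Rmat phi) (Smat phi).
Proof.
move=> hA hB ephi; split; first exact: Rmat_zo.
split; first exact: Rmat_nondeg.
split; first exact: Smat_zo.
split; first exact: Smat_nondeg.
by split; [apply: elementary_RS | apply: elementary_SR].
Qed.

Lemma Fmap_valid k (x : nsimp k) : nvalid x -> svalid (Fmap x).
Proof.
case=> hA [he hc]; split=> //; split=> [i j h | i j l hij hjl hil].
- exact: (elementary_elem_sse (hA i) (hA j) (he i j h)).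
- have e := hc i j l hij hjl hil.
  split; [|split]; apply: esym.
  + exact: Rmat_comp e.
  + exact: Smat_comp_fst e.
  + exact: Smat_comp_snd e.
Qed.

Lemma elementary_eq_of_mat n m (A : 'M[nat]_n) (B : 'M[nat]_m) (phi phi' : pt A -> pt B) :
  goodmx A -> goodmx B -> elementary phi -> elementary phi' ->
  Rmat phi = Rmat phi' -> Smat phi = Smat phi' -> phi = phi'.
Proof.
move=> hA hB ephi ephi' eR eS; apply: functional_extensionality => p; apply: pt_ext => l.
apply: (mulmx_witness_uniq (M := Rmat phi) (N := Smat phi)).
- by rewrite -elementary_RS //; case: hA.
- exact: Rmat_coord.
- exact: Smat_coord.
- by rewrite eR; apply: Rmat_coord.
- by rewrite eS; apply: Smat_coord.
Qed.

Lemma Fmap_inj k (x y : nsimp k) : nvalid x -> nvalid y -> Fmap x = Fmap y -> x = y.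
Proof.
case: x y => [sz A phi] [sz' A' phi'] [hA [he _]] [_ [he' _]] /=.
case=> esz; subst sz' => eA eR eS.
apply inj_pair2 in eA; subst A'.
apply inj_pair2 in eR; apply inj_pair2 in eS.
congr NSimp; do 3 apply: functional_extensionality_dep => ?.
apply: elementary_eq_of_mat (hA _) (hA _) (he _ _ _) (he' _ _ _) _ _.
- exact: (congr1 (fun F => F _ _ _) eR).
- exact: (congr1 (fun F => F _ _ _) eS).
Qed.

Lemma Xset_pt n (A : 'M[nat]_n) (p : pt A) : Xset A (fun l => nat_of_ord (coord p l)).
Proof. by exists (proj1_sig p); split=> //; apply: (proj2_sig p). Qed.

Lemma Xset_sub_leq n m (A : 'M[nat]_n) (B : 'M[nat]_m) : goodmx A ->
  (forall y, Xset A y -> Xset B y) -> n <= m.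
Proof.
case: n A => // n A hA AB.
have [p p0] := exists_pt_at hA 0 ord_max.
have [x [_ /(congr1 (fun y => y 0%R)) /=]] := AB _ (Xset_pt p).
by rewrite p0 => ex0; rewrite -[n]/(nat_of_ord (@ord_max n)) ex0.
Qed.

Lemma Xset_sub_edge n (A B : 'M[nat]_n) i j : goodmx A ->
  (forall y, Xset A y -> Xset B y) -> A i j = 1 -> B i j = 1.
Proof.
move=> hA AB /(exists_pt_edge hA (erefl (0 + 1)%R)) [p [pi pj]].
have [x [hx ex]] := AB _ (Xset_pt p).
have ex_coord l : x l = coord p l by apply: val_inj; rewrite /= (congr1 (fun y => y l) ex).
by rewrite -pi -pj -!ex_coord; apply: hx.
Qed.

Lemma Xset_inj n m (A : 'M[nat]_n) (B : 'M[nat]_m) :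
  goodmx A -> goodmx B -> (forall y, Xset A y <-> Xset B y) ->
  existT (fun t => 'M[nat]_t) n A = existT (fun t => 'M[nat]_t) m B.
Proof.
move=> hA hB AB.
have AsubB y : Xset A y -> Xset B y by move/AB.
have BsubA y : Xset B y -> Xset A y by move/AB.
have enm : n = m.
  by apply/eqP; rewrite eqn_leq (Xset_sub_leq hA AsubB) (Xset_sub_leq hB BsubA).
subst m; congr existT; apply/matrixP => i j.
have [Aij | Aij] := eqVneq (A i j) 1.
- by rewrite Aij (Xset_sub_edge hA AsubB Aij).
- rewrite (zo_eq0 (proj1 hA) Aij); apply/esym/(zo_eq0 (proj1 hB)).
  by apply: contra_neq Aij => /(Xset_sub_edge hB BsubA).
Qed.

Section Construction.
Variables (n m : nat) (A : 'M[nat]_n) (B : 'M[nat]_m).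
Variables (R : 'M[nat]_(n, m)) (S : 'M[nat]_(m, n)).
Hypotheses (hA : goodmx A) (hB : goodmx B) (hRS : elem_sse A B R S).

Let zR : zo R := proj1 hRS.
Let nR : nondeg R := proj1 (proj2 hRS).
Let zS : zo S := proj1 (proj2 (proj2 hRS)).
Let nS : nondeg S := proj1 (proj2 (proj2 (proj2 hRS))).
Let eA : A = (R *m S)%R := proj1 (proj2 (proj2 (proj2 (proj2 hRS)))).
Let eB : B = (S *m R)%R := proj2 (proj2 (proj2 (proj2 (proj2 hRS)))).

Lemma edgeA_RS a b a' : R a b = 1 -> S b a' = 1 -> A a a' = 1.
Proof.
by move=> Rab Sba'; apply: zo_eq1 (proj1 hA) _; rewrite eA -lt0n (mulmx_gt0 Rab Sba').
Qed.

Lemma edgeB_SR b a b' : S b a = 1 -> R a b' = 1 -> B b b' = 1.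
Proof.
by move=> Sba Rab'; apply: zo_eq1 (proj1 hB) _; rewrite eB -lt0n (mulmx_gt0 Sba Rab').
Qed.

(* The unique [b] with [R a b = 1 = S b a'] when [A a a' = 1]; junk otherwise. *)
Definition sse_loc (a a' : 'I_n) : 'I_m :=
  odflt (xchoose (proj1 nR a)) [pick b | (R a b == 1) && (S b a' == 1)].

Definition sse_invloc (b b' : 'I_m) : 'I_n :=
  odflt (xchoose (proj1 nS b)) [pick a | (S b a == 1) && (R a b' == 1)].

Lemma sse_locP a a' : A a a' = 1 -> R a (sse_loc a a') = 1 /\ S (sse_loc a a') a' = 1.
Proof.
move=> Aaa'; have : (R *m S)%R a a' != 0 by rewrite -eA Aaa'.
case/(mulmx_witness zR zS) => b [Rab Sba']; rewrite /sse_loc.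
by case: pickP => [b' /andP [/eqP -> /eqP ->] | /(_ b)] //; rewrite Rab Sba' eqxx.
Qed.

Lemma sse_locE a a' b : R a b = 1 -> S b a' = 1 -> sse_loc a a' = b.
Proof.
move=> Rab Sba'; have Aaa' := edgeA_RS Rab Sba'.
have [Rab0 Sb0a'] := sse_locP Aaa'.
by apply: (mulmx_witness_uniq (M := R) (N := S)) Rab0 Sb0a' Rab Sba'; rewrite -eA Aaa'.
Qed.

Lemma sse_invlocP b b' : B b b' = 1 -> S b (sse_invloc b b') = 1 /\ R (sse_invloc b b') b' = 1.
Proof.
move=> Bbb'; have : (S *m R)%R b b' != 0 by rewrite -eB Bbb'.
case/(mulmx_witness zS zR) => a [Sba Rab']; rewrite /sse_invloc.
by case: pickP => [a' /andP [/eqP -> /eqP ->] | /(_ a)] //; rewrite Sba Rab' eqxx.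
Qed.

Lemma sse_invlocE b b' a : S b a = 1 -> R a b' = 1 -> sse_invloc b b' = a.
Proof.
move=> Sba Rab'; have Bbb' := edgeB_SR Sba Rab'.
have [Sba0 Ra0b'] := sse_invlocP Bbb'.
by apply: (mulmx_witness_uniq (M := S) (N := R)) Sba0 Ra0b' Sba Rab'; rewrite -eB Bbb'.
Qed.

Lemma sse_map_in (p : pt A) : inX B (fun l => sse_loc (coord p l) (coord p (l + 1))).
Proof.
move=> l; have [_ S0] := sse_locP (edge_pt p (erefl (l + 1)%R)).
have [R1 _] := sse_locP (edge_pt p (erefl (l + 1 + 1)%R)).
exact: edgeB_SR S0 R1.
Qed.

Definition sse_map (p : pt A) : pt B := exist _ _ (sse_map_in p).

Lemma sse_invmap_in (q : pt B) : inX A (fun l => sse_invloc (coord q (l - 1)) (coord q l)).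
Proof.
move=> l; rewrite addrK.
have [_ R0] := sse_invlocP (edge_pt q (esym (subrK 1%R l))).
have [S1 _] := sse_invlocP (edge_pt q (erefl (l + 1)%R)).
exact: edgeA_RS R0 S1.
Qed.

Definition sse_invmap (q : pt B) : pt A := exist _ _ (sse_invmap_in q).

Lemma sse_mapK : cancel sse_map sse_invmap.
Proof.
move=> p; apply: pt_ext => l /=; rewrite subrK.
have [_ S0] := sse_locP (edge_pt p (esym (subrK 1%R l))).
have [R1 _] := sse_locP (edge_pt p (erefl (l + 1)%R)).
exact: sse_invlocE S0 R1.
Qed.

Lemma sse_invmapK : cancel sse_invmap sse_map.
Proof.
move=> q; apply: pt_ext => l /=; rewrite addrK.
have [_ R0] := sse_invlocP (edge_pt q (esym (subrK 1%R l))).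
have [S1 _] := sse_invlocP (edge_pt q (erefl (l + 1)%R)).
exact: sse_locE R0 S1.
Qed.

Lemma elementary_sse_map : elementary sse_map.
Proof.
split; [|split]; last 2 first.
- by exists sse_loc.
- by exists sse_invloc => p l; rewrite -{1}(sse_mapK p).
exists sse_invmap; split; [exact: sse_mapK | split; [exact: sse_invmapK | split; [|split]]].
- move=> p N; exists N.+1 => p' agr l hl /=.
  by rewrite (agr l) ?(agr (l + 1)%R) //; lia.
- move=> q N; exists N.+1 => q' agr l hl /=.
  by rewrite (agr l) ?(agr (l - 1)%R) //; lia.
- by move=> p; apply: pt_ext.
Qed.

Lemma Rmat_sse_map : Rmat sse_map = R.
Proof.
apply/matrixP => a b; rewrite mxE; apply: ind_eq01 => //.
rewrite (Rprop_pt hA elementary_sse_map 0); split.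
- move=> Rab; have [a' /(zo_eq1 zS) Sba'] := proj1 nS b.
  have [p [pa pa']] := exists_pt_edge hA (erefl (0 + 1)%R) (edgeA_RS Rab Sba').
  by exists p; rewrite /= pa pa'; split=> //; apply: sse_locE.
- by case=> p [<- <-]; case: (sse_locP (edge_pt p (erefl (0 + 1)%R))).
Qed.

Lemma Smat_sse_map : Smat sse_map = S.
Proof.
apply/matrixP => b a; rewrite mxE; apply: ind_eq01 => //.
rewrite (Sprop_pt01 hB elementary_sse_map); split.
- move=> Sba; have [b' /(zo_eq1 zR) Rab'] := proj1 nR a.
  have [q [qb qb']] := exists_pt_edge hB (erefl (0 + 1)%R) (edgeB_SR Sba Rab').
  exists (sse_invmap q); rewrite sse_invmapK qb; split=> //=.
  by rewrite subrr qb qb'; apply: sse_invlocE.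
- by case=> p [<- <-]; case: (sse_locP (edge_pt p (erefl (0 + 1)%R))).
Qed.

End Construction.

Lemma sse_map_comp n1 n2 n3 (A : 'M[nat]_n1) (B : 'M[nat]_n2) (C : 'M[nat]_n3)
    R1 S1 R2 S2 R3 S3 (hA : goodmx A) (hB : goodmx B) (hC : goodmx C)
    (H1 : elem_sse A B R1 S1) (H2 : elem_sse B C R2 S2) (H3 : elem_sse A C R3 S3) :
  (R1 *m R2)%R = R3 -> (R2 *m S3)%R = S1 -> (S3 *m R1)%R = S2 ->
  forall p, sse_map hC H2 (sse_map hB H1 p) = sse_map hC H3 p.
Proof.
move=> E1 E2 E3 p; apply: pt_ext => l /=.
have [_ [_ [zS2 [_ [eB _]]]]] := H2; have [zR3 [_ [zS3 _]]] := H3.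
have [R01 S01] := sse_locP H1 (edge_pt p (erefl (l + 1)%R)).
have [R12 _] := sse_locP H1 (edge_pt p (erefl (l + 1 + 1)%R)).
have [R2c S2c] := sse_locP H2 (proj2_sig (sse_map hB H1 p) l).
set b01 := sse_loc H1 _ (coord p (l + 1)) in R01 S01 R2c S2c *.
set b12 := sse_loc H1 (coord p (l + 1)) _ in R12 R2c S2c *.
set c := sse_loc H2 _ _ in R2c S2c *.
apply/esym/(sse_locE hA H3).
- by apply: zo_eq1 zR3 _; rewrite -E1 -lt0n (mulmx_gt0 R01 R2c).
- have : (R2 *m S3)%R b01 (coord p (l + 1)) != 0 by rewrite E2 S01.
  case/(mulmx_witness (proj1 H2) zS3) => c' [R2c' S3c'].
  have S2c' : S2 c' b12 = 1.
    by apply: zo_eq1 zS2 _; rewrite -E3 -lt0n (mulmx_gt0 S3c' R12).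
  suff -> : c = c' by [].
  apply: (mulmx_witness_uniq (M := R2) (N := S2)) R2c S2c R2c' S2c'.
  by rewrite -eB; apply: (proj1 hB).
Qed.

Lemma Fmap_surj k (s : ssimp k) : svalid s -> exists x : nsimp k, nvalid x /\ Fmap x = s.
Proof.
case: s => sz B R S [hB [hRS hc]] /=.
exists (NSimp (fun i j h => sse_map (hB j) (hRS i j h))); split.
- split=> //; split=> [i j h | i j l hij hjl hil p].
  + exact: elementary_sse_map (hB i) (hB j) (hRS i j h).
  + by have [E1 [E2 E3]] := hc i j l hij hjl hil; apply: sse_map_comp.
- rewrite /Fmap /=; congr SSimp; do 3 apply: functional_extensionality_dep => ?.
  + exact: Rmat_sse_map.
  + exact: Smat_sse_map.
Qed.

Lemma map_dep_if (c : bool) (T U : Type) (F : T -> U)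
    (f : c = true -> T) (g : c = false -> T) (f' : c = true -> U) (g' : c = false -> U) :
  (forall h, F (f h) = f' h) -> (forall h, F (g h) = g' h) ->
  F ((if c as c0 return c = c0 -> T then f else g) erefl) =
  (if c as c0 return c = c0 -> U then f' else g') erefl.
Proof. by case: c f g f' g'. Qed.

Lemma Rmat_nmor k (x : nsimp k) (hx : forall i, goodmx (nA x i))
    (a b : 'I_k.+1) (le : a <= b) :
  Rmat (nmor x le) = smorR (Fmap x) le.
Proof.
apply: (map_dep_if (F := @Rmat _ _ _ _)) => // h.
by move: (le_nlt_eq le h) => eab; subst b; apply: Rmat_id.
Qed.

Lemma Smat_nmor k (x : nsimp k) (hx : forall i, goodmx (nA x i))
    (a b : 'I_k.+1) (le : a <= b) :
  Smat (nmor x le) = smorS (Fmap x) le.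
Proof.
apply: (map_dep_if (F := @Smat _ _ _ _)) => // h.
by move: (le_nlt_eq le h) => eab; subst b; apply: Smat_id.
Qed.

Lemma Fmap_reidx m k (f : 'I_m.+1 -> 'I_k.+1) (hf : monotone f) (x : nsimp k) :
  nvalid x -> Fmap (nreidx hf x) = sreidx hf (Fmap x).
Proof.
case=> hx _; rewrite /Fmap /=; congr SSimp; do 3 apply: functional_extensionality_dep => ?.
- exact: Rmat_nmor.
- exact: Smat_nmor.
Qed.

Theorem mainTheorem12 :
  (* the object map X_A |-> A is well defined: X_A determines A *)
  (forall (n m : nat) (A : 'M[nat]_n) (B : 'M[nat]_m),
      goodmx A -> goodmx B -> (forall y, Xset A y <-> Xset B y) ->
      existT (fun t => 'M[nat]_t) n A = existT (fun t => 'M[nat]_t) m B) /\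
  (* the map sends simplices to simplices *)
  (forall (k : nat) (x : nsimp k), nvalid x -> svalid (Fmap x)) /\
  (* it is injective on k-simplices *)
  (forall (k : nat) (x y : nsimp k), nvalid x -> nvalid y -> Fmap x = Fmap y -> x = y) /\
  (* it is surjective on k-simplices *)
  (forall (k : nat) (s : ssimp k), svalid s -> exists x : nsimp k, nvalid x /\ Fmap x = s) /\
  (* it is simplicial: commutes with all simplicial operators (faces, degeneracies) *)
  (forall (m k : nat) (f : 'I_m.+1 -> 'I_k.+1) (hf : monotone f) (x : nsimp k),
      nvalid x -> Fmap (nreidx hf x) = sreidx hf (Fmap x)).
Proof.
split; first exact: Xset_inj.
split; first exact: Fmap_valid.
split; first exact: Fmap_inj.
split; first exact: Fmap_surj.
exact: Fmap_reidx.
Qed.
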